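(* Let $A\in\mathbb{R}^{n\times n}$, $B\in\mathbb{R}^{n\times m}$, $0\le\gamma\le1$, $D\in\mathbb{S}^n$, $E\in\mathbb{S}^m$, $d\in\mathbb{R}^n$, $K^\dagger\in\mathbb{R}^{m\times n}$ and $k^\dagger\in\mathbb{R}^m$ be given. Then the optimization problem $$\begin{aligned}\min_{\tilde D,\tilde d,\tilde E,P,h}\ & \|\tilde D-D\|_F+\|\tilde d-d\|_2+\|\tilde E-E\|_F\\ \text{s.t. }\ & P=\tilde D+\gamma A'PA-{K^\dagger}'(\tilde E+\gamma B'PB)K^\dagger,\\ & (\tilde E+\gamma B'PB)K^\dagger=-\gamma B'PA,\\ & h=\tilde d+\gamma(A+BK^\dagger)'h,\\ & 2(\tilde E+\gamma B'PB)k^\dagger=-\gamma B'h,\\ & P\succeq0,\ \tilde D\succ0,\ \tilde E\succ0,\end{aligned}$$ over symmetric $\tilde D\in\mathbb{S}^n$, $P\in\mathbb{S}^n$, $\tilde E\in\mathbb{S}^m$ and vectors $\tilde d,h\in\mathbb{R}^n$, is convex.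
   Context: Prime denotes transpose; $\|\cdot\|_F$ is the Frobenius norm; $\mathbb{S}^n$ is the set of real symmetric $n\times n$ matrices; $\succeq0$ ($\succ0$) means positive semidefinite (definite). This is the attacker's problem of finding minimally changed cost parameters making the affine policy $u=K^\dagger x+k^\dagger$ optimal for the discounted LQG problem. *)

From HB Require Import structures.
From mathcomp Require Import all_boot all_order all_algebra.
Set Implicit Arguments. Unset Strict Implicit. Unset Printing Implicit Defensive.
Import Order.TTheory GRing.Theory Num.Theory.
Local Open Scope ring_scope.

Section LQG.
Variable R : rcfType.

Definition symmx n (M : 'M[R]_n) : Prop := M^T = M.
Definition psdmx n (M : 'M[R]_n) : Prop :=
  symmx M /\ forall x : 'cV[R]_n, 0 <= (x^T *m M *m x) 0 0.
Definition pdmx n (M : 'M[R]_n) : Prop :=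
  symmx M /\ forall x : 'cV[R]_n, x != 0 -> 0 < (x^T *m M *m x) 0 0.

(* Frobenius norm (also the Euclidean 2-norm for column vectors) *)
Definition frob p q (M : 'M[R]_(p, q)) : R :=
  Num.sqrt (\sum_(i < p) \sum_(j < q) M i j ^+ 2).

(* decision variables (Dt, dt, Et, P, h) *)
Definition vars n m : Type :=
  ('M[R]_n * 'cV[R]_n * 'M[R]_m * 'M[R]_n * 'cV[R]_n)%type.

Definition vcomb n m (t : R) (x y : vars n m) : vars n m :=
  let: (D1, d1, E1, P1, h1) := x in
  let: (D2, d2, E2, P2, h2) := y in
  (t *: D1 + (1 - t) *: D2, t *: d1 + (1 - t) *: d2,
   t *: E1 + (1 - t) *: E2, t *: P1 + (1 - t) *: P2,
   t *: h1 + (1 - t) *: h2).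

Definition attack_obj n m (D : 'M[R]_n) (d : 'cV[R]_n) (E : 'M[R]_m)
  (x : vars n m) : R :=
  let: (Dt, dt, Et, P, h) := x in
  frob (Dt - D) + frob (dt - d) + frob (Et - E).

Definition attack_feasible n m (A : 'M[R]_n) (B : 'M[R]_(n, m)) (gamma : R)
  (Kd : 'M[R]_(m, n)) (kd : 'cV[R]_m) (x : vars n m) : Prop :=
  let: (Dt, dt, Et, P, h) := x in
  [/\ [/\ symmx Dt, symmx P & symmx Et],
      P = Dt + gamma *: (A^T *m P *m A)
            - Kd^T *m (Et + gamma *: (B^T *m P *m B)) *m Kd,
      (Et + gamma *: (B^T *m P *m B)) *m Kd = - (gamma *: (B^T *m P *m A)),
      h = dt + gamma *: ((A + B *m Kd)^T *m h)
    & [/\           2%:R *: ((Et + gamma *: (B^T *m P *m B)) *m kd)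
             = - (gamma *: (B^T *m h)),
          psdmx P, pdmx Dt & pdmx Et]].

Definition convex_problem n m (feas : vars n m -> Prop) (obj : vars n m -> R)
  : Prop :=
  (forall (t : R) (x y : vars n m), 0 <= t <= 1 ->
      feas x -> feas y -> feas (vcomb t x y)) /\
  (forall (t : R) (x y : vars n m), 0 <= t <= 1 ->
      obj (vcomb t x y) <= t * obj x + (1 - t) * obj y).

End LQG.

From mathcomp Require Import all_boot all_order all_algebra.
From mathcomp Require Import ring lra.

Set Implicit Arguments.
Unset Strict Implicit.
Unset Printing Implicit Defensive.

Import Order.TTheory GRing.Theory Num.Theory.
Local Open Scope ring_scope.

(* Once Kd and kd are fixed, every equality constraint is linear in the
   decision variables (Dt, dt, Et, P, h) jointly, so its solution set is a
   subspace, and the (semi)definiteness constraints describe convex cones.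
   The objective is a sum of translated Frobenius norms, which are convex by
   Minkowski's inequality. *)

Section Frobenius.
Variable R : rcfType.

Lemma cauchy_schwarz_sum (I : finType) (x y : I -> R) :
  (\sum_i x i * y i) ^+ 2 <= (\sum_i x i ^+ 2) * (\sum_i y i ^+ 2).
Proof.
pose gap i j := x i ^+ 2 * y j ^+ 2 - x i * y i * (x j * y j).
have gapE : \sum_i \sum_j gap i j
    = (\sum_i x i ^+ 2) * (\sum_i y i ^+ 2) - (\sum_i x i * y i) ^+ 2.
  rewrite expr2 !mulr_suml -sumrB; apply: eq_bigr => i _.
  by rewrite !mulr_sumr -sumrB.
have lagrange : \sum_i \sum_j (x i * y j - x j * y i) ^+ 2
    = \sum_i \sum_j gap i j + \sum_i \sum_j gap j i.
  rewrite -big_split; apply: eq_bigr => i _.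
  by rewrite -big_split; apply: eq_bigr => j _; rewrite /gap /=; ring.
have : 0 <= \sum_i \sum_j (x i * y j - x j * y i) ^+ 2.
  by apply: sumr_ge0 => i _; apply: sumr_ge0 => j _; exact: sqr_ge0.
by rewrite lagrange [X in _ + X]exchange_big gapE -mulr2n pmulrn_lge0 // subr_ge0.
Qed.

Lemma minkowski_sum (I : finType) (x y : I -> R) :
  Num.sqrt (\sum_i (x i + y i) ^+ 2)
    <= Num.sqrt (\sum_i x i ^+ 2) + Num.sqrt (\sum_i y i ^+ 2).
Proof.
set a := \sum_i x i ^+ 2; set b := \sum_i x i * y i; set c := \sum_i y i ^+ 2.
have a_ge0 : 0 <= a by apply: sumr_ge0 => i _; exact: sqr_ge0.
have c_ge0 : 0 <= c by apply: sumr_ge0 => i _; exact: sqr_ge0.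
have sumE : \sum_i (x i + y i) ^+ 2 = a + 2 * b + c.
  rewrite mulr_sumr -!big_split; apply: eq_bigr => i _ /=; ring.
have b_le : b <= Num.sqrt a * Num.sqrt c.
  rewrite -sqrtrM // (le_trans (ler_norm b)) // -sqrtr_sqr.
  by rewrite ler_sqrt ?mulr_ge0 ?cauchy_schwarz_sum.
rewrite -[leRHS]ger0_norm ?addr_ge0 ?sqrtr_ge0 // -sqrtr_sqr.
rewrite ler_sqrt ?sqr_ge0 // sumE sqrrD !sqr_sqrtr //.
lra.
Qed.

Lemma frob_pair p q (M : 'M[R]_(p, q)) :
  frob M = Num.sqrt (\sum_(ij : 'I_p * 'I_q) M ij.1 ij.2 ^+ 2).
Proof. by rewrite /frob pair_big. Qed.

Lemma ler_frobD p q (M N : 'M[R]_(p, q)) : frob (M + N) <= frob M + frob N.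
Proof.
rewrite !frob_pair (eq_bigr (fun ij => (M ij.1 ij.2 + N ij.1 ij.2) ^+ 2)).
  exact: minkowski_sum.
by move=> ij _; rewrite mxE.
Qed.

Lemma frobZ p q (t : R) (M : 'M[R]_(p, q)) :
  0 <= t -> frob (t *: M) = t * frob M.
Proof.
move=> t_ge0; rewrite !frob_pair (eq_bigr (fun ij => t ^+ 2 * M ij.1 ij.2 ^+ 2)).
  by rewrite -mulr_sumr sqrtrM ?sqr_ge0 // sqrtr_sqr ger0_norm.
by move=> ij _; rewrite mxE exprMn.
Qed.

Lemma frob_convex p q (t : R) (M N : 'M[R]_(p, q)) : 0 <= t <= 1 ->
  frob (t *: M + (1 - t) *: N) <= t * frob M + (1 - t) * frob N.
Proof.
case/andP=> t_ge0 t_le1.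
rewrite -frobZ // -[(1 - t) * _]frobZ ?subr_ge0 //.
exact: ler_frobD.
Qed.

End Frobenius.

Section Combinations.
Variable R : rcfType.
Implicit Types t s : R.

Lemma addr_comb (V : lmodType R) t s (a b c d : V) :
  (t *: a + s *: b) + (t *: c + s *: d) = t *: (a + c) + s *: (b + d).
Proof. by rewrite !scalerDr addrACA. Qed.

Lemma oppr_comb (V : lmodType R) t s (a b : V) :
  - (t *: a + s *: b) = t *: (- a) + s *: (- b).
Proof. by rewrite opprD !scalerN. Qed.

Lemma scaler_comb (V : lmodType R) t s k (a b : V) :
  k *: (t *: a + s *: b) = t *: (k *: a) + s *: (k *: b).
Proof. by rewrite scalerDr !scalerA mulrC [k * s]mulrC. Qed.

Lemma convex_subr (V : lmodType R) t (a b c : V) :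
  t *: a + (1 - t) *: b - c = t *: (a - c) + (1 - t) *: (b - c).
Proof. by rewrite !scalerBr addrACA -opprD -scalerDl [t + _]addrC subrK scale1r. Qed.

Lemma mulmx_combr p q r (M : 'M[R]_(p, q)) t s (a b : 'M[R]_(q, r)) :
  M *m (t *: a + s *: b) = t *: (M *m a) + s *: (M *m b).
Proof. by rewrite mulmxDr !scalemxAr. Qed.

Lemma mulmx_combl p q r (M : 'M[R]_(q, r)) t s (a b : 'M[R]_(p, q)) :
  (t *: a + s *: b) *m M = t *: (a *m M) + s *: (b *m M).
Proof. by rewrite mulmxDl !scalemxAl. Qed.

Lemma trmx_comb p q t s (a b : 'M[R]_(p, q)) :
  (t *: a + s *: b)^T = t *: a^T + s *: b^T.
Proof. by rewrite linearD !linearZ. Qed.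

Lemma symmx_comb n t s (M N : 'M[R]_n) :
  symmx M -> symmx N -> symmx (t *: M + s *: N).
Proof. by rewrite /symmx trmx_comb => -> ->. Qed.

Lemma quadform_comb n t s (M N : 'M[R]_n) (x : 'cV[R]_n) :
  (x^T *m (t *: M + s *: N) *m x) 0 0
    = t * (x^T *m M *m x) 0 0 + s * (x^T *m N *m x) 0 0.
Proof. by rewrite mulmx_combr mulmx_combl !mxE. Qed.

Lemma psdmx_comb n t s (M N : 'M[R]_n) :
  0 <= t -> 0 <= s -> psdmx M -> psdmx N -> psdmx (t *: M + s *: N).
Proof.
move=> t_ge0 s_ge0 [symM psdM] [symN psdN]; split; first exact: symmx_comb.
by move=> x; rewrite quadform_comb addr_ge0 ?mulr_ge0.
Qed.

Lemma pdmx_convex n t (M N : 'M[R]_n) :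
  0 <= t <= 1 -> pdmx M -> pdmx N -> pdmx (t *: M + (1 - t) *: N).
Proof.
move=> /andP[t_ge0 t_le1] [symM pdM] [symN pdN]; split; first exact: symmx_comb.
move=> x /[dup] /pdM Mx_gt0 /pdN Nx_gt0; rewrite quadform_comb; nra.
Qed.

End Combinations.

Section AttackProblem.
Variables (R : rcfType) (n m : nat).

Lemma attack_feasible_convex (A : 'M[R]_n) (B : 'M[R]_(n, m)) (gamma : R)
    (Kd : 'M[R]_(m, n)) (kd : 'cV[R]_m) (t : R) (x y : vars R n m) :
  0 <= t <= 1 -> attack_feasible A B gamma Kd kd x ->
  attack_feasible A B gamma Kd kd y ->
  attack_feasible A B gamma Kd kd (vcomb t x y).
Proof.
move: x y => [[[[D1 d1] E1] P1] h1] [[[[D2 d2] E2] P2] h2] t01 /=.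
case=> [[symD1 symP1 symE1] eqP1 eqK1 eqh1 [eqk1 psdP1 pdD1 pdE1]].
case=> [[symD2 symP2 symE2] eqP2 eqK2 eqh2 [eqk2 psdP2 pdD2 pdE2]].
have [t_ge0 t_le1] := andP t01.
rewrite !(mulmx_combr, mulmx_combl, scaler_comb, oppr_comb, addr_comb).
split.
- by split; apply: symmx_comb.
- by rewrite -eqP1 -eqP2.
- by rewrite eqK1 eqK2.
- by rewrite -eqh1 -eqh2.
split.
- by rewrite eqk1 eqk2.
- by apply: psdmx_comb; rewrite ?subr_ge0.
- exact: pdmx_convex.
- exact: pdmx_convex.
Qed.

Lemma attack_obj_convex (D : 'M[R]_n) (d : 'cV[R]_n) (E : 'M[R]_m)
    (t : R) (x y : vars R n m) :
  0 <= t <= 1 ->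
  attack_obj D d E (vcomb t x y)
    <= t * attack_obj D d E x + (1 - t) * attack_obj D d E y.
Proof.
move: x y => [[[[D1 d1] E1] P1] h1] [[[[D2 d2] E2] P2] h2] t01 /=.
rewrite !convex_subr.
have := frob_convex (D1 - D) (D2 - D) t01.
have := frob_convex (d1 - d) (d2 - d) t01.
have := frob_convex (E1 - E) (E2 - E) t01.
lra.
Qed.

End AttackProblem.

Theorem proposition3 (R : rcfType) (n m : nat)
  (A : 'M[R]_n) (B : 'M[R]_(n, m)) (gamma : R)
  (D : 'M[R]_n) (E : 'M[R]_m) (d : 'cV[R]_n)
  (Kd : 'M[R]_(m, n)) (kd : 'cV[R]_m) :
  0 <= gamma <= 1 -> symmx D -> symmx E ->
  convex_problem (attack_feasible A B gamma Kd kd) (attack_obj D d E).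
Proof.
move=> _ _ _; split=> t x y t01.
  exact: attack_feasible_convex.
exact: attack_obj_convex.
Qed.
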